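(* Let $k \geq 3$ and $n \geq 2^{k-1}$ be integers, and let $A \subseteq \{1,2,\ldots,n\}$ be a set that contains no $k$-term geometric progression. Then \[ n - |A| \geq \left( \frac{1}{2^k -1} + \frac{2}{5}\left( \frac{1}{5^{k-1} } - \frac{1}{6^{k-1}} \right) + \frac{4}{15}\left( \frac{1}{7^{k-1} } - \frac{1}{10^{k-1}} \right) \right) n + O\left(\frac{\log n}{k} \right), \] where the implied constant in the $O$-term is absolute (independent of $n$, $k$ and $A$).
   Context: A geometric progression of length $k$ with common ratio $r$, where $r \neq 0, \pm 1$ is a real number, is a sequence $(a_0, a_1, \ldots, a_{k-1})$ of nonzero real numbers with $a_i/a_{i-1} = r$ for $i = 1, \ldots, k-1$. A $k$-term (or $k$-) geometric progression is a geometric progression of length $k$ with some common ratio $r$. A set contains no $k$-term geometric progression if it does not contain numbers $a_0, \ldots, a_{k-1}$ such that $(a_0, \ldots, a_{k-1})$ is a $k$-term geometric progression. *)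

From Stdlib Require Import Reals List Arith.
Import ListNotations.
Open Scope R_scope.

(* A (finite set of positive integers, given as a duplicate-free list)
   contains a k-term geometric progression: there are a nonzero real a0 and a
   real ratio r <> 0, 1, -1 such that a0 * r^i belongs to A for all i < k.
   (The terms a0 r^i are then automatically nonzero.) *)
Definition contains_kGP (k : nat) (A : list nat) : Prop :=
  exists a0 r : R,
    a0 <> 0 /\ r <> 0 /\ r <> 1 /\ r <> -1 /\
    forall i : nat, (i < k)%nat -> exists m : nat, In m A /\ INR m = a0 * r ^ i.

Definition ck (k : nat) : R :=
  1 / (2 ^ k - 1)
  + 2 / 5 * (1 / 5 ^ (k - 1) - 1 / 6 ^ (k - 1))
  + 4 / 15 * (1 / 7 ^ (k - 1) - 1 / 10 ^ (k - 1)).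

From Stdlib Require Import Reals List Arith Lia Lra Classical.
Import ListNotations.

(* A set A in [1, n] without k-term geometric progressions misses an element of every k-term
   progression contained in [1, n], so n - |A| is at least the size of any family of pairwise
   disjoint such progressions.  Two families are used.  The first consists of y, 2y, ...,
   2^(k-1) y for all y with floor (log2 (n / y)) = -1 (mod k); counted level by level, there are
   n / (2^k - 1) of them up to an error of one per level, i.e. O(log n / k).  The second consists
   of w, 3w, ..., 3^(k-1) w for w coprime to 6 with n / w in a window [a, b): distinct w give
   disjoint progressions because 3 does not divide w, and since their terms are odd they can meet
   the first family only at its bases y, which the window is chosen to avoid.  There are about
   n (1/a - 1/b) / 3 of them, and a = 2^k 3^i, b = 2^(k-1) 3^(i+1) with 3^(k-1) <= a < 3^k
   (a = 9, b = 12 for k = 3) make 1 / (2^k - 1) + (1/a - 1/b) / 3 at least ck k. *)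

Open Scope nat_scope.

Lemma div_bounds n d : d <> 0 -> d * (n / d) <= n < d * (n / d) + d.
Proof.
  intros Hd. pose proof (Nat.div_mod_eq n d). pose proof (Nat.mod_upper_bound n d Hd). lia.
Qed.

Lemma pow_ge_1 c e : 1 <= c -> 1 <= c ^ e.
Proof. intros Hc. pose proof (Nat.pow_nonzero c e). lia. Qed.

Lemma NoDup_app_range_length (M A : list nat) n :
  NoDup (M ++ A) -> (forall e, In e (M ++ A) -> 1 <= e <= n) -> length M + length A <= n.
Proof.
  intros HMA Hrange. rewrite <- length_app.
  replace n with (length (seq 1 n)) by apply length_seq.
  apply NoDup_incl_length; [exact HMA|].
  intros e He. apply in_seq. specialize (Hrange e He). lia.
Qed.

Lemma disjoint_blocks_packing {I : Type} (K : list I) (B : I -> list nat) (A : list nat) n :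
  NoDup K -> NoDup A -> (forall m, In m A -> 1 <= m <= n) ->
  (forall i, In i K -> exists e, In e (B i) /\ ~ In e A /\ 1 <= e <= n) ->
  (forall i j e, In i K -> In j K -> In e (B i) -> In e (B j) -> i = j) ->
  length K + length A <= n.
Proof.
  intros HK HA HArange Hmiss Hdisj.
  assert (HM : exists M, NoDup M /\ length M = length K /\
            forall e, In e M -> ~ In e A /\ 1 <= e <= n /\ exists i, In i K /\ In e (B i)).
  { clear HA HArange. induction K as [|i K IH].
    - exists []. split; [constructor | split; [reflexivity | intros e []]].
    - inversion HK as [|? ? HiK HK']; subst.
      destruct IH as [M [HMdup [HMlen HMprop]]].
      + exact HK'.
      + intros j Hj. apply Hmiss. now right.
      + intros j j' e Hj Hj'. apply Hdisj; now right.
      + destruct (Hmiss i (or_introl eq_refl)) as [e [HeB [HeA Hen]]].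
        exists (e :: M). split; [|split].
        * constructor; [|exact HMdup]. intros HeM.
          destruct (HMprop e HeM) as [_ [_ [j [Hj HeBj]]]].
          assert (i = j) as <- by (apply (Hdisj i j e); simpl; auto).
          contradiction.
        * simpl. now rewrite HMlen.
        * intros e' [<- | He'].
          -- split; [exact HeA | split; [exact Hen |]]. exists i. split; [now left | exact HeB].
          -- destruct (HMprop e' He') as [He'A [He'n [j [Hj He'B]]]].
             split; [exact He'A | split; [exact He'n |]]. exists j. split; [now right | exact He'B]. }
  destruct HM as [M [HMdup [HMlen HMprop]]]. rewrite <- HMlen.
  apply NoDup_app_range_length.
  - apply NoDup_app; auto. intros e He. now apply HMprop.
  - intros e He. apply in_app_or in He as [He | He]; [now apply HMprop | now apply HArange].
Qed.

Definition gprog (k c x : nat) : list nat := map (fun i => c ^ i * x) (seq 0 k).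

Lemma in_gprog k c x e : In e (gprog k c x) <-> exists i, i < k /\ e = c ^ i * x.
Proof.
  unfold gprog. rewrite in_map_iff. split.
  - intros [i [<- Hi]]. apply in_seq in Hi. exists i. split; [lia | reflexivity].
  - intros [i [Hi ->]]. exists i. split; [reflexivity | apply in_seq; lia].
Qed.

Lemma gprog_range k c x n e :
  1 <= c -> 1 <= x -> c ^ (k - 1) * x <= n -> In e (gprog k c x) -> 1 <= e <= n.
Proof.
  intros Hc Hx Hn He. apply in_gprog in He as [i [Hi ->]].
  pose proof (Nat.pow_le_mono_r c i (k - 1) ltac:(lia) ltac:(lia)).
  pose proof (pow_ge_1 c i Hc). nia.
Qed.

Lemma kGP_free_gprog_miss k c x A :
  ~ contains_kGP k A -> 2 <= c -> 1 <= x -> exists e, In e (gprog k c x) /\ ~ In e A.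
Proof.
  intros Hfree Hc Hx. apply NNPP. intros Hall. apply Hfree.
  exists (INR x), (INR c).
  assert (2 <= INR c)%R by (apply (le_INR 2); lia).
  assert (1 <= INR x)%R by (apply (le_INR 1); lia).
  repeat split; try lra.
  intros i Hi. exists (c ^ i * x). split.
  - apply NNPP. intros Hnot. apply Hall. exists (c ^ i * x).
    split; [apply in_gprog; eauto | exact Hnot].
  - rewrite mult_INR, pow_INR. ring.
Qed.

Definition block_base (k n y : nat) : Prop :=
  exists j, 2 ^ (j * k + k - 1) * y <= n < 2 ^ (j * k + k) * y.

Lemma block_base_le k n y : block_base k n y -> 2 ^ (k - 1) * y <= n.
Proof.
  intros [j [Hj _]].
  pose proof (Nat.pow_le_mono_r 2 (k - 1) (j * k + k - 1) ltac:(lia) ltac:(lia)). nia.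
Qed.

Lemma pow2_exponent_le E F y n : 2 ^ E * y <= n -> n < 2 ^ S F * y -> E <= F.
Proof.
  intros H1 H2. destruct (Nat.le_gt_cases E F) as [|HFE]; [assumption|].
  pose proof (Nat.pow_le_mono_r 2 (S F) E ltac:(lia) HFE). nia.
Qed.

Lemma block_base_gprog_disjoint k n y y' e :
  1 <= k -> block_base k n y -> block_base k n y' ->
  In e (gprog k 2 y) -> In e (gprog k 2 y') -> y = y'.
Proof.
  intros Hk.
  enough (key : forall y y' i i', block_base k n y -> block_base k n y' ->
            i <= i' < k -> 2 ^ i * y = 2 ^ i' * y' -> y = y').
  { intros Hy Hy' He He'.
    apply in_gprog in He as [i [Hi ->]]. apply in_gprog in He' as [i' [Hi' Heq]].
    destruct (Nat.le_gt_cases i i').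
    - apply (key y y' i i'); auto.
    - symmetry. apply (key y' y i' i); auto; lia. }
  clear y y'. intros y y' i i' [j [Hj1 Hj2]] [j' [Hj'1 Hj'2]] Hii' Heq.
  set (d := i' - i).
  assert (Hy : y = 2 ^ d * y').
  { replace i' with (i + d) in Heq by lia. rewrite Nat.pow_add_r, <- Nat.mul_assoc in Heq.
    apply Nat.mul_cancel_l in Heq; [exact Heq | apply Nat.pow_nonzero; lia]. }
  subst y. rewrite Nat.mul_assoc, <- Nat.pow_add_r in Hj1, Hj2.
  assert (j * k + k - 1 + d <= j' * k + k - 1).
  { apply (pow2_exponent_le _ _ y' n); [exact Hj1|].
    replace (S (j' * k + k - 1)) with (j' * k + k) by lia. exact Hj'2. }
  assert (j' * k + k - 1 <= j * k + k - 1 + d).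
  { apply (pow2_exponent_le _ _ y' n); [exact Hj'1|].
    replace (S (j * k + k - 1 + d)) with (j * k + k + d) by lia. exact Hj2. }
  assert (d = 0) as ->.
  { destruct (Nat.le_gt_cases j' j) as [Hj | Hj].
    - pose proof (Nat.mul_le_mono_r j' j k Hj). lia.
    - pose proof (Nat.mul_le_mono_r (S j) j' k Hj). simpl in *. lia. }
  simpl. lia.
Qed.

(* Level j of the block bases is the interval (n / 2^((j+1)k), n / 2^((j+1)k-1)]. *)
Fixpoint bases (k d n : nat) : list nat :=
  match d with
  | 0 => []
  | S d => seq (S (n / 2 ^ k)) (n / 2 ^ (k - 1) - n / 2 ^ k) ++ bases k d (n / 2 ^ k)
  end.

Lemma block_base_div k n y : 1 <= k -> block_base k (n / 2 ^ k) y -> block_base k n y.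
Proof.
  intros Hk [j [H1 H2]]. exists (S j).
  destruct (div_bounds n (2 ^ k)) as [D1 D2]; [apply Nat.pow_nonzero; lia|].
  replace (S j * k + k - 1) with (k + (j * k + k - 1)) by lia.
  replace (S j * k + k) with (k + (j * k + k)) by lia.
  rewrite (Nat.pow_add_r 2 k (j * k + k - 1)), (Nat.pow_add_r 2 k (j * k + k)), <- !Nat.mul_assoc.
  set (K := 2 ^ k) in *. set (m := n / K) in *.
  pose proof (Nat.mul_le_mono_l _ _ K H1).
  assert (S m <= 2 ^ (j * k + k) * y) as HS by exact H2.
  pose proof (Nat.mul_le_mono_l _ _ K HS). lia.
Qed.

Lemma in_bases k d n y : 1 <= k -> In y (bases k d n) -> 1 <= y /\ block_base k n y.
Proof.
  intros Hk. revert n. induction d as [|d IH]; intros n Hy; [destruct Hy|].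
  simpl in Hy. apply in_app_or in Hy as [Hy | Hy].
  - apply in_seq in Hy. split; [lia|]. exists 0. simpl (0 * k). rewrite !Nat.add_0_l.
    destruct (div_bounds n (2 ^ k)); [apply Nat.pow_nonzero; lia|].
    destruct (div_bounds n (2 ^ (k - 1))); [apply Nat.pow_nonzero; lia|].
    split; nia.
  - destruct (IH _ Hy) as [H1 H2]. split; [exact H1 | now apply block_base_div].
Qed.

Lemma bases_NoDup k d n : 1 <= k -> NoDup (bases k d n).
Proof.
  intros Hk. revert n. induction d as [|d IH]; intros n; simpl; [constructor|].
  apply NoDup_app; [apply seq_NoDup | apply IH |].
  intros y Hy Hy'. apply in_seq in Hy. apply in_bases in Hy' as [_ Hbase]; [|exact Hk].
  apply block_base_le in Hbase. pose proof (pow_ge_1 2 (k - 1) ltac:(lia)). nia.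
Qed.

Lemma bases_length k d n :
  1 <= k -> n < 2 ^ (k * d) -> n <= (2 ^ k - 1) * (length (bases k d n) + d).
Proof.
  intros Hk. revert n. induction d as [|d IH]; intros n Hn.
  - rewrite Nat.mul_0_r in Hn. simpl in Hn. replace n with 0 by lia. apply Nat.le_0_l.
  - simpl bases. rewrite length_app, length_seq.
    assert (Hpow : 2 ^ k = 2 * 2 ^ (k - 1)).
    { rewrite <- Nat.pow_succ_r'. f_equal. lia. }
    set (q := n / 2 ^ (k - 1)). set (m := n / 2 ^ k).
    assert (Hm : m = q / 2).
    { unfold m, q. rewrite Nat.Div0.div_div, Nat.mul_comm, <- Hpow. reflexivity. }
    assert (IHm : m <= (2 ^ k - 1) * (length (bases k d m) + d)).
    { apply IH. apply Nat.Div0.div_lt_upper_bound.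
      rewrite <- Nat.pow_add_r. replace (k + k * d) with (k * S d) by lia. exact Hn. }
    destruct (div_bounds n (2 ^ (k - 1))) as [Q1 Q2]; [apply Nat.pow_nonzero; lia|].
    destruct (div_bounds q 2) as [M1 M2]; [lia|]. rewrite <- Hm in M1, M2. fold q in Q1, Q2.
    rewrite Hpow in IHm |- *.
    set (L := length (bases k d m)) in *. set (K := 2 ^ (k - 1)) in *.
    assert (1 <= K) by (apply pow_ge_1; lia).
    assert (q = 2 * m \/ q = 2 * m + 1) as [-> | ->] by lia; nia.
Qed.

Definition unit_mod6 (w : nat) : Prop := exists t, w = 6 * t + 1 \/ w = 6 * t + 5.

(* Only whole blocks of six strictly inside (lo, hi] are used, so a few units near the ends are
   dropped; units6_length bounds the loss. *)
Definition units6 (lo hi : nat) : list nat :=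
  let ts := seq (S (lo / 6)) (hi / 6 - lo / 6 - 1) in
  map (fun t => 6 * t + 1) ts ++ map (fun t => 6 * t + 5) ts.

Lemma in_units6 lo hi w : In w (units6 lo hi) -> lo < w <= hi /\ unit_mod6 w.
Proof.
  intros Hw. unfold units6 in Hw.
  destruct (div_bounds lo 6) as [L1 L2]; [lia|]. destruct (div_bounds hi 6) as [H1 H2]; [lia|].
  apply in_app_or in Hw as [Hw | Hw]; apply in_map_iff in Hw as [t [<- Ht]];
    apply in_seq in Ht; (split; [lia | exists t; lia]).
Qed.

Lemma units6_NoDup lo hi : NoDup (units6 lo hi).
Proof.
  unfold units6. apply NoDup_app.
  - apply NoDup_map_NoDup_ForallPairs; [intros t t' _ _; lia | apply seq_NoDup].
  - apply NoDup_map_NoDup_ForallPairs; [intros t t' _ _; lia | apply seq_NoDup].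
  - intros w Hw Hw'. apply in_map_iff in Hw as [t [<- _]]. apply in_map_iff in Hw' as [t' [? _]].
    lia.
Qed.

Lemma units6_length lo hi : hi - lo <= 3 * length (units6 lo hi) + 11.
Proof.
  unfold units6. rewrite length_app, !length_map, length_seq.
  destruct (div_bounds lo 6) as [L1 L2]; [lia|]. destruct (div_bounds hi 6) as [H1 H2]; [lia|].
  lia.
Qed.

Lemma odd_pow3_mul i w : Nat.odd w = true -> Nat.odd (3 ^ i * w) = true.
Proof.
  intros Hw. induction i as [|i IH]; [now rewrite Nat.mul_1_l|].
  rewrite Nat.pow_succ_r', <- Nat.mul_assoc, Nat.odd_mul, IH. reflexivity.
Qed.

Lemma unit_mod6_odd w : unit_mod6 w -> Nat.odd w = true.
Proof.
  intros [t [-> | ->]]; apply Nat.odd_spec.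
  - exists (3 * t). lia.
  - exists (3 * t + 2). lia.
Qed.

Lemma gprog3_disjoint k w w' e :
  unit_mod6 w -> unit_mod6 w' -> In e (gprog k 3 w) -> In e (gprog k 3 w') -> w = w'.
Proof.
  enough (key : forall w w' i i', unit_mod6 w -> i <= i' -> 3 ^ i * w = 3 ^ i' * w' -> w = w').
  { intros Hw Hw' He He'.
    apply in_gprog in He as [i [_ ->]]. apply in_gprog in He' as [i' [_ Heq]].
    destruct (Nat.le_gt_cases i i').
    - apply (key w w' i i'); auto.
    - symmetry. apply (key w' w i' i); auto; lia. }
  clear w w'. intros w w' i i' Hw Hii' Heq.
  replace i' with (i + (i' - i)) in Heq by lia.
  rewrite Nat.pow_add_r, <- Nat.mul_assoc in Heq.
  apply Nat.mul_cancel_l in Heq; [|apply Nat.pow_nonzero; lia].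
  destruct (i' - i) as [|d]; [simpl in Heq; lia|].
  rewrite Nat.pow_succ_r', <- Nat.mul_assoc in Heq.
  destruct Hw as [t [-> | ->]]; lia.
Qed.

Lemma gprog23_disjoint k n y w e :
  block_base k n y -> unit_mod6 w -> (forall i, i < k -> ~ block_base k n (3 ^ i * w)) ->
  In e (gprog k 2 y) -> In e (gprog k 3 w) -> False.
Proof.
  intros Hy Hw Hclear He He'.
  apply in_gprog in He as [i [_ ->]]. apply in_gprog in He' as [i' [Hi' Heq]].
  destruct i as [|i].
  - apply (Hclear i' Hi'). rewrite <- Heq, Nat.mul_1_l. exact Hy.
  - pose proof (odd_pow3_mul i' w (unit_mod6_odd w Hw)) as Hodd.
    rewrite <- Heq, Nat.pow_succ_r', <- Nat.mul_assoc, Nat.odd_mul in Hodd. discriminate.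
Qed.

Definition clear_window (k a b : nat) : Prop :=
  forall n w, a * w <= n -> n < b * w ->
    3 ^ (k - 1) * w <= n /\ forall i, i < k -> ~ block_base k n (3 ^ i * w).

Lemma in_window_units6 k n a b w :
  1 <= a -> 1 <= b -> clear_window k a b -> In w (units6 (n / b) (n / a)) ->
  unit_mod6 w /\ 1 <= w /\ 3 ^ (k - 1) * w <= n /\
  forall i, i < k -> ~ block_base k n (3 ^ i * w).
Proof.
  intros Ha Hb Hwin Hw. apply in_units6 in Hw as [[Hlo Hhi] Hw6].
  destruct (div_bounds n a) as [A1 A2]; [lia|]. destruct (div_bounds n b) as [B1 B2]; [lia|].
  pose proof (Nat.mul_le_mono_l _ _ a Hhi).
  assert (S (n / b) <= w) as HS by exact Hlo. pose proof (Nat.mul_le_mono_l _ _ b HS).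
  destruct (Hwin n w) as [Hfit Hoff]; [lia | lia |].
  repeat split; auto. lia.
Qed.

Definition family (k d n a b : nat) : list (nat + nat) :=
  map inl (bases k d n) ++ map inr (units6 (n / b) (n / a)).

Definition family_block (k : nat) (key : nat + nat) : list nat :=
  match key with inl y => gprog k 2 y | inr w => gprog k 3 w end.

Lemma family_blocks_disjoint k d n a b key key' e :
  1 <= k -> 1 <= a -> 1 <= b -> clear_window k a b ->
  In key (family k d n a b) -> In key' (family k d n a b) ->
  In e (family_block k key) -> In e (family_block k key') -> key = key'.
Proof.
  intros Hk Ha Hb Hwin Hkey Hkey'.
  apply in_app_or in Hkey as [Hkey | Hkey]; apply in_map_iff in Hkey as [x [<- Hx]];
    apply in_app_or in Hkey' as [Hkey' | Hkey']; apply in_map_iff in Hkey' as [x' [<- Hx']];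
    simpl; intros He He'.
  - apply in_bases in Hx as [_ Hx]; [|exact Hk]. apply in_bases in Hx' as [_ Hx']; [|exact Hk].
    f_equal. exact (block_base_gprog_disjoint k n x x' e Hk Hx Hx' He He').
  - apply in_bases in Hx as [_ Hx]; [|exact Hk].
    destruct (in_window_units6 k n a b x' Ha Hb Hwin Hx') as [Hx'6 [_ [_ Hoff]]].
    destruct (gprog23_disjoint k n x x' e Hx Hx'6 Hoff He He').
  - apply in_bases in Hx' as [_ Hx']; [|exact Hk].
    destruct (in_window_units6 k n a b x Ha Hb Hwin Hx) as [Hx6 [_ [_ Hoff]]].
    destruct (gprog23_disjoint k n x' x e Hx' Hx6 Hoff He' He).
  - destruct (in_window_units6 k n a b x Ha Hb Hwin Hx) as [Hx6 _].
    destruct (in_window_units6 k n a b x' Ha Hb Hwin Hx') as [Hx'6 _].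
    f_equal. exact (gprog3_disjoint k x x' e Hx6 Hx'6 He He').
Qed.

Lemma kGP_free_count k n A a b d :
  1 <= k -> NoDup A -> (forall m, In m A -> 1 <= m <= n) -> ~ contains_kGP k A ->
  1 <= a -> 1 <= b -> clear_window k a b ->
  length (bases k d n) + length (units6 (n / b) (n / a)) + length A <= n.
Proof.
  intros Hk HA HArange Hfree Ha Hb Hwin.
  replace (length (bases k d n) + length (units6 (n / b) (n / a)))
    with (length (family k d n a b)) by (unfold family; now rewrite length_app, !length_map).
  apply (disjoint_blocks_packing _ (family_block k)); [| exact HA | exact HArange | |].
  - apply NoDup_app.
    + apply NoDup_map_NoDup_ForallPairs; [intros y y' _ _ [=]; auto | now apply bases_NoDup].
    + apply NoDup_map_NoDup_ForallPairs; [intros w w' _ _ [=]; auto | apply units6_NoDup].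
    + intros key Hy Hw. apply in_map_iff in Hy as [y [<- _]]. apply in_map_iff in Hw as [w [? _]].
      discriminate.
  - intros key Hkey. apply in_app_or in Hkey as [Hkey | Hkey];
      apply in_map_iff in Hkey as [x [<- Hx]]; simpl.
    + apply in_bases in Hx as [Hx1 Hbase]; [|exact Hk].
      destruct (kGP_free_gprog_miss k 2 x A Hfree ltac:(lia) Hx1) as [e [He HeA]].
      exists e. split; [exact He | split; [exact HeA |]].
      apply (gprog_range k 2 x n e); [lia | exact Hx1 | now apply block_base_le | exact He].
    + destruct (in_window_units6 k n a b x Ha Hb Hwin Hx) as [_ [Hx1 [Hfit _]]].
      destruct (kGP_free_gprog_miss k 3 x A Hfree ltac:(lia) Hx1) as [e [He HeA]].
      exists e. split; [exact He | split; [exact HeA |]].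
      apply (gprog_range k 3 x n e); [lia | exact Hx1 | exact Hfit | exact He].
  - intros key key' e Hkey Hkey'. now apply (family_blocks_disjoint k d n a b).
Qed.

Lemma clear_window_pow k i0 :
  1 <= k -> 3 ^ (k - 1) <= 2 ^ k * 3 ^ i0 -> 3 ^ (i0 + 1) <= 2 ^ k ->
  clear_window k (2 ^ k * 3 ^ i0) (2 ^ (k - 1) * 3 ^ (i0 + 1)).
Proof.
  intros Hk Hlow Hhigh n w H1 H2. split; [nia|].
  intros i Hi [j [J1 J2]].
  destruct j as [|j].
  - replace (0 * k + k - 1) with (k - 1) in J1 by lia. replace (0 * k + k) with k in J2 by lia.
    destruct (Nat.le_gt_cases i i0) as [Hii0 | Hii0].
    + pose proof (Nat.pow_le_mono_r 3 i i0 ltac:(lia) Hii0) as Hp.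
      apply (Nat.mul_le_mono_l _ _ (2 ^ k)), (Nat.mul_le_mono_r _ _ w) in Hp. nia.
    + pose proof (Nat.pow_le_mono_r 3 (i0 + 1) i ltac:(lia) ltac:(lia)) as Hp.
      apply (Nat.mul_le_mono_l _ _ (2 ^ (k - 1))), (Nat.mul_le_mono_r _ _ w) in Hp. nia.
  - replace (S j * k + k - 1) with ((k - 1) + k + j * k) in J1 by lia.
    rewrite !Nat.pow_add_r in J1.
    pose proof (Nat.mul_le_mono _ _ _ _ (pow_ge_1 2 (j * k) ltac:(lia)) (pow_ge_1 3 i ltac:(lia))).
    apply (Nat.mul_le_mono_l _ _ (2 ^ (k - 1))), (Nat.mul_le_mono_r _ _ w) in Hhigh.
    assert (w <= 2 ^ (j * k) * (3 ^ i * w)) as Hw by nia.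
    apply (Nat.mul_le_mono_l _ _ (2 ^ (k - 1) * 2 ^ k)) in Hw.
    nia.
Qed.

Lemma clear_window_3_9_12 : clear_window 3 9 12.
Proof.
  intros n w H1 H2. split; [simpl; lia|].
  intros i Hi [j [J1 J2]].
  destruct j as [|j].
  - simpl in J1, J2. destruct i as [|[|[|i]]]; simpl in *; lia.
  - replace (S j * 3 + 3 - 1) with (5 + j * 3) in J1 by lia. rewrite Nat.pow_add_r in J1.
    pose proof (Nat.mul_le_mono _ _ _ _ (pow_ge_1 2 (j * 3) ltac:(lia)) (pow_ge_1 3 i ltac:(lia))).
    assert (w <= 2 ^ (j * 3) * (3 ^ i * w)) by nia.
    simpl in J1. lia.
Qed.

Lemma pow3_multiple_between a b : 1 <= b < 3 * a -> exists i, a <= b * 3 ^ i < 3 * a.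
Proof.
  remember (a - b) as f eqn:Hf. revert b Hf.
  induction f as [f IH] using lt_wf_ind; intros b Hf Hb.
  destruct (Nat.le_gt_cases a b).
  - exists 0. rewrite Nat.pow_0_r. lia.
  - destruct (IH (a - 3 * b)) with (b := 3 * b) as [i Hi]; [lia | reflexivity | lia |].
    exists (S i). rewrite Nat.pow_succ_r'. nia.
Qed.

Lemma pow3_succ_le_pow4 k : 4 <= k -> 3 ^ (k + 1) <= 2 ^ k * 2 ^ k.
Proof.
  induction 1 as [|k Hk IH]; [simpl; lia|].
  replace (S k + 1) with (S (k + 1)) by lia. rewrite !Nat.pow_succ_r'. nia.
Qed.

Lemma window_exponent k :
  4 <= k -> exists i0, 3 ^ (k - 1) <= 2 ^ k * 3 ^ i0 < 3 ^ k /\ 3 ^ (i0 + 1) <= 2 ^ k.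
Proof.
  intros Hk. pose proof (pow_ge_1 2 k ltac:(lia)) as H2k.
  assert (E : 3 ^ k = 3 * 3 ^ (k - 1)) by (rewrite <- Nat.pow_succ_r'; f_equal; lia).
  assert (2 ^ k < 3 ^ k) by (apply Nat.pow_lt_mono_l; lia).
  destruct (pow3_multiple_between (3 ^ (k - 1)) (2 ^ k)) as [i0 Hi0]; [lia|].
  exists i0. split; [lia|].
  pose proof (pow3_succ_le_pow4 k Hk) as H34.
  rewrite Nat.add_1_r, Nat.pow_succ_r' in H34 |- *.
  assert (Hlt : 2 ^ k * (3 * 3 ^ i0) < 2 ^ k * 2 ^ k) by nia.
  apply Nat.mul_lt_mono_pos_l in Hlt; lia.
Qed.

Lemma pow3_18_le_pow5 j : 6 <= j -> 18 * 3 ^ j <= 5 ^ j.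
Proof. induction 1 as [|j Hj IH]; [simpl; lia | rewrite !Nat.pow_succ_r'; nia]. Qed.

Open Scope R_scope.

Lemma INR_div_bounds n d : (1 <= d)%nat -> INR n / INR d - 1 < INR (n / d) <= INR n / INR d.
Proof.
  intros Hd. destruct (div_bounds n d) as [D1 D2]; [lia|].
  apply le_INR in D1. apply lt_INR in D2. rewrite mult_INR in D1. rewrite plus_INR, mult_INR in D2.
  assert (1 <= INR d) by (apply (le_INR 1); exact Hd).
  split.
  - apply (Rmult_lt_reg_l (INR d)); [lra|]. unfold Rdiv. field_simplify; lra.
  - apply (Rmult_le_reg_l (INR d)); [lra|]. unfold Rdiv. field_simplify; lra.
Qed.

Lemma bases_length_ge k d n :
  (1 <= k)%nat -> (n < 2 ^ (k * d))%nat -> INR n / (2 ^ k - 1) - INR d <= INR (length (bases k d n)).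
Proof.
  intros Hk Hn. pose proof (bases_length k d n Hk Hn) as H. apply le_INR in H.
  assert (2 <= 2 ^ k) by (rewrite <- pow_1 at 1; apply Rle_pow; [lra | lia]).
  rewrite mult_INR, plus_INR, minus_INR, pow_INR in H by (apply (pow_ge_1 2 k); lia).
  replace (INR 2) with 2 in H by (simpl; ring). rewrite INR_1 in H.
  apply (Rmult_le_reg_l (2 ^ k - 1)); [lra|]. unfold Rdiv. field_simplify; [lra | lra].
Qed.

Lemma units6_length_ge n a b :
  (1 <= a)%nat -> (1 <= b)%nat ->
  INR n * (/ INR a - / INR b) / 3 - 4 <= INR (length (units6 (n / b) (n / a))).
Proof.
  intros Ha Hb. pose proof (units6_length (n / b) (n / a)) as H. apply le_INR in H.
  rewrite plus_INR, mult_INR in H.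
  destruct (INR_div_bounds n a Ha). destruct (INR_div_bounds n b Hb).
  assert (INR (n / a) - INR (n / b) <= INR (n / a - n / b)).
  { destruct (Nat.le_gt_cases (n / b) (n / a)) as [Hle | Hgt].
    - rewrite minus_INR by exact Hle. lra.
    - replace (n / a - n / b)%nat with 0%nat by lia. apply lt_INR in Hgt. simpl. lra. }
  replace (INR 3) with 3 in H by (simpl; ring). replace (INR 11) with 11 in H by (simpl; ring).
  unfold Rdiv in *. lra.
Qed.

Lemma ck_le_pow5 k : ck k <= / (2 ^ k - 1) + 2 / 3 / 5 ^ (k - 1).
Proof.
  unfold ck. set (j := (k - 1)%nat).
  assert (0 < 5 ^ j) by (apply pow_lt; lra).
  assert (0 < / 6 ^ j) by (apply Rinv_0_lt_compat, pow_lt; lra).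
  assert (0 < / 10 ^ j) by (apply Rinv_0_lt_compat, pow_lt; lra).
  assert (/ 7 ^ j <= / 5 ^ j) by (apply Rinv_le_contravar; [assumption | apply pow_incr; lra]).
  unfold Rdiv in *. lra.
Qed.

Lemma pow_window_density k i0 :
  (7 <= k)%nat -> (2 ^ k * 3 ^ i0 < 3 ^ k)%nat ->
  ck k <= / (2 ^ k - 1) + (/ INR (2 ^ k * 3 ^ i0) - / INR (2 ^ (k - 1) * 3 ^ (i0 + 1))) / 3.
Proof.
  intros Hk Ha. eapply Rle_trans; [apply ck_le_pow5 | apply Rplus_le_compat_l].
  set (j := (k - 1)%nat). replace k with (S j) in * by lia.
  pose proof (pow3_18_le_pow5 j ltac:(lia)) as H5. apply le_INR in H5. apply lt_INR in Ha.
  rewrite !mult_INR, !pow_INR in *.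
  replace (INR 2) with 2 in * by (simpl; ring). replace (INR 3) with 3 in * by (simpl; ring).
  replace (INR 5) with 5 in * by (simpl; ring). replace (INR 18) with 18 in * by (simpl; ring).
  replace (S j - 1)%nat with j by lia. replace (i0 + 1)%nat with (S i0) by lia. cbn [pow] in *.
  set (X := 2 ^ j * 3 ^ i0).
  assert (0 < X) by (apply Rmult_lt_0_compat; apply pow_lt; lra).
  replace ((/ (2 * 2 ^ j * 3 ^ i0) - / (2 ^ j * (3 * 3 ^ i0))) / 3) with (/ (18 * X))
    by (unfold X; field; split; apply pow_nonzero; lra).
  replace (2 / 3 / 5 ^ j) with (/ (3 / 2 * 5 ^ j)) by (field; apply pow_nonzero; lra).
  apply Rinv_le_contravar; [lra|]. unfold X. lra.
Qed.

Lemma window_exists k :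
  (3 <= k)%nat -> exists a b, (1 <= a)%nat /\ (1 <= b)%nat /\ clear_window k a b /\
    ck k <= / (2 ^ k - 1) + (/ INR a - / INR b) / 3.
Proof.
  intros Hk.
  assert (Hpow : forall i0, (3 ^ (k - 1) <= 2 ^ k * 3 ^ i0)%nat -> (3 ^ (i0 + 1) <= 2 ^ k)%nat ->
    ck k <= / (2 ^ k - 1) + (/ INR (2 ^ k * 3 ^ i0) - / INR (2 ^ (k - 1) * 3 ^ (i0 + 1))) / 3 ->
    exists a b, (1 <= a)%nat /\ (1 <= b)%nat /\ clear_window k a b /\
      ck k <= / (2 ^ k - 1) + (/ INR a - / INR b) / 3).
  { intros i0 Hlow Hhigh Hck. exists (2 ^ k * 3 ^ i0)%nat, (2 ^ (k - 1) * 3 ^ (i0 + 1))%nat.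
    split; [apply (Nat.mul_le_mono 1 _ 1); apply pow_ge_1; lia |].
    split; [apply (Nat.mul_le_mono 1 _ 1); apply pow_ge_1; lia |].
    split; [apply clear_window_pow; lia | exact Hck]. }
  destruct (Nat.lt_ge_cases k 7) as [Hk7 | Hk7].
  - assert (k = 3 \/ k = 4 \/ k = 5 \/ k = 6)%nat as [-> | [-> | [-> | ->]]] by lia.
    + exists 9%nat, 12%nat. split; [lia | split; [lia | split; [exact clear_window_3_9_12 |]]].
      unfold ck. simpl. lra.
    + apply (Hpow 1%nat); [simpl; lia | simpl; lia | unfold ck; simpl; lra].
    + apply (Hpow 1%nat); [simpl; lia | simpl; lia | unfold ck; simpl; lra].
    + apply (Hpow 2%nat); [simpl; lia | simpl; lia | unfold ck; simpl; lra].
  - destruct (window_exponent k ltac:(lia)) as [i0 [[Hlow Hup] Hhigh]].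
    apply (Hpow i0 Hlow Hhigh). exact (pow_window_density k i0 Hk7 Hup).
Qed.

Lemma ln_le_mono x y : 0 < x -> x <= y -> ln x <= ln y.
Proof.
  intros Hx [Hxy | ->]; [left; now apply ln_increasing | apply Rle_refl].
Qed.

Lemma levels_exist k n :
  (1 <= k)%nat -> (1 <= n)%nat ->
  exists d, (n < 2 ^ (k * d))%nat /\ INR d <= 1 + 2 * (ln (INR n) / INR k).
Proof.
  intros Hk Hn. set (L := Nat.log2 n). exists (S (L / k)).
  destruct (Nat.log2_spec n ltac:(lia)) as [Hle Hlt]. fold L in Hle, Hlt. split.
  - destruct (div_bounds L k) as [_ HL]; [lia|].
    eapply Nat.lt_le_trans; [exact Hlt | apply Nat.pow_le_mono_r; lia].
  - apply le_INR in Hle. rewrite pow_INR in Hle. replace (INR 2) with 2 in Hle by (simpl; ring).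
    assert (HlnL : INR L * ln 2 <= ln (INR n)).
    { rewrite <- ln_pow by lra. apply ln_le_mono; [apply pow_lt; lra | exact Hle]. }
    pose proof ln_lt_2. pose proof (pos_INR L).
    assert (HL2 : INR L <= 2 * ln (INR n)) by nra.
    destruct (INR_div_bounds L k Hk) as [_ HLk].
    assert (0 < INR k) by (apply lt_0_INR; lia).
    rewrite S_INR. unfold Rdiv in *.
    assert (INR L * / INR k <= 2 * ln (INR n) * / INR k)
      by (apply Rmult_le_compat_r; [left; now apply Rinv_0_lt_compat | exact HL2]).
    lra.
Qed.

Lemma ln_over_k_ge k n : (3 <= k)%nat -> (2 ^ (k - 1) <= n)%nat -> / 3 <= ln (INR n) / INR k.
Proof.
  intros Hk Hn. apply le_INR in Hn. rewrite pow_INR in Hn. replace (INR 2) with 2 in Hn by (simpl; ring).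
  assert (Hk3 : 3 <= INR k) by (apply (le_INR 3) in Hk; simpl in Hk; lra).
  assert (Hln : INR (k - 1) * ln 2 <= ln (INR n)).
  { rewrite <- ln_pow by lra. apply ln_le_mono; [apply pow_lt; lra | exact Hn]. }
  rewrite minus_INR in Hln by lia. rewrite INR_1 in Hln. pose proof ln_lt_2.
  apply (Rmult_le_reg_r (INR k)); [lra|]. unfold Rdiv. rewrite Rmult_assoc, Rinv_l by lra. nra.
Qed.

Theorem theorem1 :
  exists C : R, forall (k n : nat) (A : list nat),
    (3 <= k)%nat -> (2 ^ (k - 1) <= n)%nat ->
    NoDup A -> (forall m, In m A -> (1 <= m <= n)%nat) ->
    ~ contains_kGP k A ->
    INR n - INR (length A) >= ck k * INR n - C * (ln (INR n) / INR k).
Proof.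
  exists 17. intros k n A Hk Hn HA HArange Hfree.
  assert (Hn1 : (1 <= n)%nat) by (pose proof (pow_ge_1 2 (k - 1) ltac:(lia)); lia).
  destruct (window_exists k Hk) as [a [b [Ha [Hb [Hwin Hck]]]]].
  destruct (levels_exist k n ltac:(lia) Hn1) as [d [Hd Hdlog]].
  pose proof (kGP_free_count k n A a b d ltac:(lia) HA HArange Hfree Ha Hb Hwin) as Hcount.
  apply le_INR in Hcount. rewrite !plus_INR in Hcount.
  pose proof (bases_length_ge k d n ltac:(lia) Hd).
  pose proof (units6_length_ge n a b Ha Hb).
  pose proof (ln_over_k_ge k n Hk Hn).
  assert (ck k * INR n <= (/ (2 ^ k - 1) + (/ INR a - / INR b) / 3) * INR n)
    by (apply Rmult_le_compat_r; [apply pos_INR | exact Hck]).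
  unfold Rdiv in *. lra.
Qed.
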